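(* Let $A$ be a first countable locally convex topological vector space over $\mathbb C$, give $A^\vee$ the topology of uniform convergence on compact sets, and let $K\subset A^\vee$ be compact. Then $\bigcup_{\phi\in K}\ker\phi$ is closed in $A$.
   Context: $A^\vee$ is the space of continuous linear functionals on $A$, with subbasis $\{\phi:\phi(C)\subset U\}$, $C\subset A$ compact, $U\subset\mathbb C$ open. *)

From HB Require Import structures.
From mathcomp Require Import all_boot all_order all_algebra.
From mathcomp Require Import all_classical all_reals all_analysis.
From mathcomp Require Import complex.
Set Implicit Arguments. Unset Strict Implicit. Unset Printing Implicit Defensive.
Import Order.TTheory GRing.Theory Num.Theory.
Import numFieldTopology.Exports numFieldNormedType.Exports.
Local Open Scope classical_set_scope.
Local Open Scope ring_scope.

Definition first_countable (T : topologicalType) : Prop :=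
  forall x : T, exists B : set_system T,
    [/\ countable B, (forall b, B b -> nbhs x b) &
        (forall U, nbhs x U -> exists2 b, B b & b `<=` U)].

Definition continuous_linear_functional (K : numFieldType) (A : tvsType K)
    (phi : A -> K) : Prop :=
  (forall (a : K) (x y : A), phi (a *: x + y) = a * phi x + phi y) /\
  continuous phi.

Definition Cplx (R : realType) : numClosedFieldType := R[i].

From HB Require Import structures.
From mathcomp Require Import all_boot all_order all_algebra.
From mathcomp Require Import all_classical all_reals all_analysis.
From mathcomp Require Import complex.
Set Implicit Arguments. Unset Strict Implicit. Unset Printing Implicit Defensive.
Import Order.TTheory GRing.Theory Num.Theory.
Import numFieldTopology.Exports numFieldNormedType.Exports.
Local Open Scope classical_set_scope.
Local Open Scope ring_scope.

(* By first countability a point x of the closure is the limit of a sequence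
   y_n of zeros of functionals in K.  If no phi in K vanished at x, continuity
   would give phi (y_n) <> 0 for n >= N, and since {x} u {y_n | n >= N} is
   compact, the functions not vanishing on it form a compact-open neighbourhood
   of phi.  Compactness of K makes N uniform over K, so for large n no
   functional in K vanishes at y_n: a contradiction. *)

Lemma first_countable_nested_nbhs (T : topologicalType) (x : T) :
  first_countable T ->
  exists W : nat -> set T, (forall n, nbhs x (W n)) /\
    (forall U, nbhs x U -> \forall n \near \oo, W n `<=` U).
Proof.
move=> /(_ x) [B [cB Bx Bb]].
have [B0|/surjfunPex [g gB]] := pfcard_geP cB.
  by have [b] := Bb setT filterT; rewrite B0.
have gx k : nbhs x (g k) by apply: Bx; rewrite gB; exists k.
exists (fun n => \bigcap_(k < n.+1) g k); split.
  move=> n; rewrite bigcap_mkord.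
  by apply: big_ind => //; [exact: filterT | exact: filterI].
move=> U /Bb [b]; rewrite gB => -[m _ <-] gmU; exists m => // n /= mn.
by apply: subset_trans gmU; apply: bigcap_inf.
Qed.

Lemma first_countable_closure_cvg (T : topologicalType) (S : set T) (x : T) :
  first_countable T -> closure S x ->
  exists2 y : nat -> T, (forall n, S (y n)) & y @ \oo --> x.
Proof.
move=> /(first_countable_nested_nbhs x) [W [Wx Wcvg]] clSx.
have /choice [y yP] n : exists y, S y /\ W n y.
  by have [y [Sy Wy]] := clSx _ (Wx n); exists y.
exists y => [n|U /Wcvg]; first by case: (yP n).
by apply: filterS => n WnU; apply: WnU; case: (yP n).
Qed.

Lemma cvg_compact_range (T : topologicalType) (z : nat -> T) (x : T) :
  z @ \oo --> x -> compact ([set x] `|` range z).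
Proof.
move=> zx F PF FC.
have [clx|nclx] := pselect (cluster F x); first by exists x; split => //; left.
have [E [V [FE Vx EV0]]] : exists E V, [/\ F E, nbhs x V & E `&` V = set0].
  apply: contra_notP nclx => noEV E V FE VV; apply/set0P/eqP => EV0.
  by apply: noEV; exists E, V.
(* F avoids a tail of z, so it contains the finite set of the initial terms. *)
have [M _ zV] : \forall n \near \oo, V (z n) by exact: zx.
have notEV y : E y -> V y -> False.
  by move=> Ey Vy; have : (E `&` V) y by []; rewrite EV0.
have FD : F (z @` [set n | (n < M)%N]).
  apply: filterS (filterI FC FE) => c [[->|[n _ <-]] Ec].
    by case: (notEV x) => //; exact: nbhs_singleton.
  exists n => //=; rewrite ltnNge; apply/negP => Mn.
  exact: (notEV (z n) Ec (zV _ Mn)).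
have finD : finite_set (z @` [set n | (n < M)%N]).
  by apply: finite_image; exact: finite_II.
have [c [[n _ <-] clc]] := finite_compact finD PF FD.
by exists (z n); split => //; right; exists n.
Qed.

Lemma compact_open_near_cvg (T U : topologicalType)
    (phi : {compact-open, T -> U}) (y : nat -> T) (x : T) (O : set U) :
  {for x, continuous phi} -> y @ \oo --> x -> open O -> O (phi x) ->
  \forall h \near phi & n \near \oo, O (h (y n)).
Proof.
move=> phix yx oO Ophix.
have [N _ phiyO] : \forall n \near \oo, O (phi (y n)).
  by apply: (cvg_comp _ _ yx phix); exact: open_nbhs_nbhs.
pose C := [set x] `|` range (fun k => y (k + N)%N).
have cC : compact C.
  exact/cvg_compact_range/(cvg_comp _ _ (cvg_addnr N) yx).
exists ([set h | h @` C `<=` O], [set n | (N <= n)%N]).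
  split; last by exists N.
  apply: open_nbhs_nbhs; split; first exact: compact_open_open.
  by move=> _ [z [->|[k _ <-]] <-] //; apply: phiyO; rewrite /= leq_addl.
move=> [h n] [/= hCO Nn]; apply: hCO; exists (y n) => //.
by right; exists (n - N)%N => //; rewrite subnK.
Qed.

Lemma closed_bigcup_preimage (T U : topologicalType)
    (K : set {compact-open, T -> U}) (Z : set U) :
  first_countable T -> compact K -> (forall phi, K phi -> continuous phi) ->
  closed Z -> closed (\bigcup_(phi in K) phi @^-1` Z).
Proof.
move=> fcT cK Kcont cZ x /(first_countable_closure_cvg fcT) [y yKZ yx].
apply: contrapT => xKZ.
have Kfar phi : K phi -> \forall h \near phi & n \near \oo, (~` Z) (h (y n)).
  move=> Kphi.
  apply: compact_open_near_cvg (Kcont _ Kphi x) yx (closed_openC cZ) _.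
  by move=> Zphix; apply: xKZ; exists phi.
have [N _ KfarN] := (iffLR (compact_near_coveringP K) cK) _ _ _ _ Kfar.
have [phi Kphi Zphiy] := yKZ N.
exact: KfarN N (leqnn N) phi Kphi Zphiy.
Qed.

Theorem lemma7p9 (R : realType) (A : tvsType (Cplx R))
    (hA : first_countable A)
    (K : set {compact-open, A -> Cplx R})
    (hKdual : forall phi, K phi -> continuous_linear_functional phi)
    (hK : compact K) :
  closed (\bigcup_(phi in K) [set x : A | phi x = 0]).
Proof.
apply: (closed_bigcup_preimage (Z := [set 0])) => //.
  by move=> phi /hKdual [].
exact/accessible_closed_set1/hausdorff_accessible/norm_hausdorff.
Qed.
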